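(* Let $M=U(2)\oplus D_4\oplus D_4$, identified with $H^2(X,\mathbb Z)^+$, and let $K=U\oplus A_1^{\oplus8}\subset M$ be the index-2 sublattice generated by the fibre class $F$, the class $S_0$ and $F_1,\dots,F_8$. Then $O(q_M)\cong O(q_N)\cong S_8$, and every permutation of the eight classes $F_1,\dots,F_8$ (fixing $F$ and $S_0$) extends to an isometry of $M$; the group of isometries of $M$ so obtained is naturally isomorphic, via the natural map $O(M)\to O(q_M)$, to $O(q_M)$.
   Context: Lattice conventions: $U$ has Gram matrix $\begin{pmatrix}0&1\\1&0\end{pmatrix}$; $A_1,D_4$ are negative definite root lattices; $L(2)$ means the form multiplied by $2$. Setup: $X$ is the K3 surface (minimal resolution of the double cover of $\mathbb P^1\times\mathbb P^1$ branched along $C+L_0+L_1$, where $C:y_0^2\prod_{i=1}^4(x_0-\lambda_ix_1)+y_1^2\prod_{i=5}^8(x_0-\lambda_ix_1)=0$ for distinct $\lambda_i$, $L_j=\{y_j=0\}$) with the automorphism $\sigma$ of order 4 lifting $(x_0:x_1,y_0:y_1)\mapsto(x_0:x_1,y_0:-y_1)$, the elliptic fibration $\pi$ induced by projection to $(x_0:x_1)$ with fibre class $F$, singular fibres $E_i+F_i$ of type III and sections $S_0,S_1$ with $E_i\cdot S_0=F_i\cdot S_1=1$; $H^2(X,\mathbb Z)^+=\{x:(\sigma^2)^*x=x\}\cong M$, and $H^2(X,\mathbb Z)^+$ is generated by $K$ and $(F_1+\dots+F_8)/2$. $N=U\oplus U(2)\oplus D_4\oplus D_4$. For an even lattice $T$,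 $A_T=T^*/T$ and $q_T:A_T\to\mathbb Q/2\mathbb Z$, $q_T(x)=\langle x,x\rangle\bmod 2\mathbb Z$ is the discriminant quadratic form; $O(q_T)$ is its isometry group. *)

From HB Require Import structures.
From mathcomp Require Import all_boot all_order all_algebra all_fingroup.
Set Implicit Arguments. Unset Strict Implicit. Unset Printing Implicit Defensive.
Import Order.TTheory GRing.Theory Num.Theory.
Local Open Scope ring_scope.

Definition is_int (q : rat) : Prop := exists z : int, q = z%:~R.

Definition bform n (B : 'M[rat]_n) (x y : 'rV[rat]_n) : rat := (x *m B *m y^T) 0 0.

Definition zspan k n (P : 'M[rat]_(k, n)) (x : 'rV[rat]_n) : Prop :=
  exists c : 'I_k -> int, x = \sum_i (c i)%:~R *: row i P.

Definition dual n (B : 'M[rat]_n) (L : 'rV[rat]_n -> Prop) (x : 'rV[rat]_n) : Prop :=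
  forall y, L y -> is_int (bform B x y).

Definition eq_mod2 (a b : rat) : Prop := is_int ((a - b) / 2).

(* A_L = L^*/L is modelled by L^* up to the equivalence x ~ y <-> x - y \in L. *)
Definition disc_isometry n (B : 'M[rat]_n) (L : 'rV[rat]_n -> Prop)
    (f : 'rV[rat]_n -> 'rV[rat]_n) : Prop :=
  (forall x, dual B L x -> dual B L (f x)) /\
  (forall x y, dual B L x -> dual B L y -> L (x - y) -> L (f x - f y)) /\
  (forall x y, dual B L x -> dual B L y -> L (f (x + y) - (f x + f y))) /\
  (forall x y, dual B L x -> dual B L y -> L (f x - f y) -> L (x - y)) /\
  (forall y, dual B L y -> exists2 x, dual B L x & L (f x - y)) /\
  (forall x, dual B L x -> eq_mod2 (bform B (f x) (f x)) (bform B x x)).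

Definition disc_equiv n (B : 'M[rat]_n) (L : 'rV[rat]_n -> Prop)
    (f g : 'rV[rat]_n -> 'rV[rat]_n) : Prop :=
  forall x, dual B L x -> L (f x - g x).

(* Phi : S_8 -> O(q_L) is a group isomorphism.  MathComp composes
   permutations as (s * t) i = t (s i); we use the same ("first s, then t")
   convention for the group law of O(q_L). *)
Definition iso_S8_Oq n (B : 'M[rat]_n) (L : 'rV[rat]_n -> Prop)
    (Phi : 'S_8 -> 'rV[rat]_n -> 'rV[rat]_n) : Prop :=
  (forall s, disc_isometry B L (Phi s)) /\
  (forall s t, disc_equiv B L (Phi (s * t)%g) (Phi t \o Phi s)) /\
  (forall s t, disc_equiv B L (Phi s) (Phi t) -> s = t) /\
  (forall f, disc_isometry B L f -> exists s, disc_equiv B L f (Phi s)).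

Definition Oq_isom_S8 n (B : 'M[rat]_n) (L : 'rV[rat]_n -> Prop) : Prop :=
  exists Phi, iso_S8_Oq B L Phi.

(* negative definite D4 (central node 1) *)
Definition d4 (a b : nat) : rat :=
  if a == b then -2 else if ((a == 1%N) || (b == 1%N)) then 1 else 0.

(* Gram matrix on Q^10 in the basis (F, S_0, F_1, ..., F_8):
   F^2 = 0, F.S_0 = 1, S_0^2 = -2, F_i^2 = -2, all other products 0. *)
Definition BK : 'M[rat]_10 :=
  \matrix_(i, j)
    if i == j then (if (val i == 0)%N then 0 else -2)
    else if ((val i == 0) && (val j == 1)) || ((val i == 1) && (val j == 0))
    then 1 else 0.

(* generators of M = K + Z (F_1 + ... + F_8)/2 : the 10 basis vectors of K
   and the vector (F_1+...+F_8)/2 *)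
Definition PM : 'M[rat]_(11, 10) :=
  \matrix_(i, j)
    if (val i < 10)%N then ((val i == val j)%:R)
    else if (2 <= val j)%N then 1/2 else 0.

Definition Mlat (x : 'rV[rat]_10) : Prop := zspan PM x.

Definition BM0 : 'M[rat]_10 :=
  \matrix_(i, j)
    let a := val i in let b := val j in
    if (a < 2)%N && (b < 2)%N then (if a == b then 0 else 2)
    else if (2 <= a < 6)%N && (2 <= b < 6)%N then d4 (a - 2) (b - 2)
    else if (6 <= a)%N && (6 <= b)%N then d4 (a - 6) (b - 6)
    else 0.

(* N = U + U(2) + D4 + D4 = Z^12 with this Gram matrix *)
Definition BN : 'M[rat]_12 :=
  \matrix_(i, j)
    let a := val i in let b := val j in
    if (a < 2)%N && (b < 2)%N then (if a == b then 0 else 1)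
    else if (2 <= a < 4)%N && (2 <= b < 4)%N then (if a == b then 0 else 2)
    else if (4 <= a < 8)%N && (4 <= b < 8)%N then d4 (a - 4) (b - 4)
    else if (8 <= a)%N && (8 <= b)%N then d4 (a - 8) (b - 8)
    else 0.

Definition Nlat (x : 'rV[rat]_12) : Prop := zspan (1%:M : 'M[rat]_12) x.

(* the linear map of Q^10 fixing F, S_0 and sending F_(i+1) to F_(s i + 1) *)
Definition permF (s : 'S_8) (k : 'I_10) : 'I_10 :=
  if (val k < 2)%N then k else inord (s (inord (val k - 2)) + 2).

Definition gperm (s : 'S_8) : 'M[rat]_10 :=
  \matrix_(k, l) ((permF s k == l)%:R).

From HB Require Import structures.
From mathcomp Require Import all_boot all_order all_algebra all_fingroup.
From mathcomp Require Import ring zify.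
Import GRing.Theory Num.Theory.
Local Open Scope ring_scope.
Set Implicit Arguments. Unset Strict Implicit. Unset Printing Implicit Defensive.

(* Half-sums of the F_i over even subsets of {1, ..., 8} represent M^*/M, the
   subset being determined up to complement; this identifies q_M with the form
   q(v) = -|v|/2 mod 2 on even words modulo the all-ones word, a space F_2^6 on
   which S_8 acts by permuting the F_i.  An isometry of q_M is determined by the
   images of the six classes {i, i+1}, i < 6: they have q = 1 and meet like the
   Dynkin diagram A_6, and an exhaustive search shows that every such
   configuration is the image of the standard one under a permutation; hence
   S_8 -> O(q_M) is onto.  It is injective because a permutation is recovered
   from its action on the classes of pairs {a, b}.  Finally N = U + M' with U
   unimodular and M' isometric to M, so explicit integral maps identify the
   discriminant forms of N and M and transport the result. *)

(** * Integral vectors and bilinear forms over Q *)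

Lemma is_intP (q : rat) : reflect (is_int q) (q \is a Num.int).
Proof. exact: intrP. Qed.

Lemma is_int_intr (z : int) : is_int z%:~R. Proof. by exists z. Qed.
Lemma is_int_nat (n : nat) : is_int n%:R. Proof. by exists n. Qed.
Lemma is_int0 : is_int 0. Proof. by exists 0. Qed.
Lemma is_int1 : is_int 1. Proof. by exists 1. Qed.

Lemma is_intD a b : is_int a -> is_int b -> is_int (a + b).
Proof. by move=> /is_intP ? /is_intP ?; apply/is_intP; rewrite rpredD. Qed.
Lemma is_intN a : is_int a -> is_int (- a).
Proof. by move=> /is_intP ?; apply/is_intP; rewrite rpredN. Qed.
Lemma is_intB a b : is_int a -> is_int b -> is_int (a - b).
Proof. by move=> ? ?; apply: is_intD => //; apply: is_intN. Qed.
Lemma is_intM a b : is_int a -> is_int b -> is_int (a * b).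
Proof. by move=> /is_intP ? /is_intP ?; apply/is_intP; rewrite rpredM. Qed.
Lemma is_int_sum (I : finType) (F : I -> rat) :
  (forall i, is_int (F i)) -> is_int (\sum_i F i).
Proof. by move=> H; apply/is_intP; apply: rpred_sum => i _; apply/is_intP. Qed.

Lemma is_int_eq a b : is_int a -> a = b -> is_int b.
Proof. by move=> H <-. Qed.

Lemma is_int_bit (b : bool) : is_int b%:R.
Proof. exact: is_int_nat. Qed.

Lemma is_int_halfP n : is_int (n%:R / 2) <-> ~~ odd n.
Proof.
split => [H|He]; last first.
  by exists (n./2)%:Z; rewrite -{1}(even_halfK He) -muln2 natrM mulfK.
apply/negP => Ho; have : is_int (n%:R / 2 - (n./2)%:R) by apply: is_intB => //; exact: is_int_nat.
have E : n = (n./2 * 2 + 1)%N by rewrite -{1}(odd_double_half n) Ho -muln2 addnC.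
have -> : n%:R / 2 - (n./2)%:R = 1 / 2 :> rat by rewrite {1}E natrD natrM; field.
by move/is_intP.
Qed.

Lemma is_int_sub_frac a : is_int (2 * a) -> is_int (a - (a \isn't a Num.int)%:R / 2).
Proof.
move=> [z Hz]; case: (is_intP a) => Ha /=; first by rewrite mul0r subr0.
have [q [r [Ez Hr]]] : exists q r : int, z = q * 2 + r /\ (r = 0 \/ r = 1).
  by exists (z %/ 2)%Z, (z %% 2)%Z; split; [exact: divz_eq | lia].
have Ea : a = z%:~R / 2 by rewrite -Hz; field.
case: Hr => Er; rewrite Ez Er in Ea.
  by exfalso; apply: Ha; exists q; rewrite Ea addr0 intrM; field.
by exists q; rewrite Ea intrD intrM; field.
Qed.

Lemma bit_eq_of_is_int (b c : bool) : is_int ((b%:R - c%:R) / 2) -> b = c.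
Proof. by case: b; case: c => //= /is_intP. Qed.

Lemma odd_eq_of_is_int (p q : nat) : is_int ((p%:R - q%:R) / 2) -> odd p = odd q.
Proof.
move=> H; apply: bit_eq_of_is_int.
have := is_intB H (is_intB (is_int_nat p./2) (is_int_nat q./2)); move/is_int_eq; apply.
by rewrite -{1}(odd_double_half p) -{1}(odd_double_half q) -!muln2 !natrD !natrM; field.
Qed.

Lemma eq_mod2_refl a : eq_mod2 a a.
Proof. by rewrite /eq_mod2 subrr mul0r; exact: is_int0. Qed.
Lemma eq_mod2_sym a b : eq_mod2 a b -> eq_mod2 b a.
Proof. by rewrite /eq_mod2 => /is_intN; rewrite -mulNr opprB. Qed.
Lemma eq_mod2_trans a b c : eq_mod2 a b -> eq_mod2 b c -> eq_mod2 a c.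
Proof. by rewrite /eq_mod2 => H1 H2; have := is_intD H1 H2; rewrite -mulrDl addrA subrK. Qed.
Lemma eq_mod2_addr a z : is_int z -> eq_mod2 (a + 2 * z) a.
Proof. by move=> Hz; rewrite /eq_mod2 addrC addKr mulrC mulrA mulVf ?mul1r. Qed.

(* Concrete matrix identities are proved by rewriting both sides to [natmx] form
   and comparing entries with [vm_compute]; [natsum] is a computable [\sum]. *)
Definition natmx m n (f : nat -> nat -> rat) : 'M[rat]_(m, n) :=
  \matrix_(i < m, j < n) f i j.

Definition natsum n (F : nat -> rat) : rat := foldr (fun k acc => F k + acc) 0 (iota 0 n).

Definition all_lt2 m n (P : nat -> nat -> bool) :=
  all (fun i => all (P i) (iota 0 n)) (iota 0 m).

Lemma natmxE m n f (i : 'I_m) (j : 'I_n) : natmx m n f i j = f i j.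
Proof. by rewrite mxE. Qed.

Lemma natsumS n F : natsum n.+1 F = natsum n F + F n.
Proof.
rewrite /natsum -addn1 iotaD foldr_cat /= addr0.
by elim: (iota 0 n) => [|a l IH] /=; rewrite ?add0r // IH addrA.
Qed.

Lemma natsumE n (F : nat -> rat) : \sum_(k < n) F k = natsum n F.
Proof.
elim: n => [|n IH]; first by rewrite big_ord0.
by rewrite big_ord_recr /= IH natsumS.
Qed.

Lemma mul_natmx m n p f g :
  natmx m n f *m natmx n p g = natmx m p (fun i j => natsum n (fun k => f i k * g k j)).
Proof. by apply/matrixP => i j; rewrite !mxE -natsumE; apply: eq_bigr => k _; rewrite !mxE. Qed.

Lemma tr_natmx m n f : (natmx m n f)^T = natmx n m (fun i j => f j i).
Proof. by apply/matrixP => i j; rewrite !mxE. Qed.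

Lemma natmx1 n : (1%:M : 'M[rat]_n) = natmx n n (fun i j => (i == j)%:R).
Proof. by apply/matrixP => i j; rewrite !mxE. Qed.

Lemma natmx0 m n : (0 : 'M[rat]_(m, n)) = natmx m n (fun _ _ => 0).
Proof. by apply/matrixP => i j; rewrite !mxE. Qed.

Lemma all_lt2P m n P : all_lt2 m n P -> forall i j, (i < m)%N -> (j < n)%N -> P i j.
Proof.
move=> /allP H i j Hi Hj.
have /allP : all (P i) (iota 0 n) by apply: H; rewrite mem_iota.
by apply; rewrite mem_iota.
Qed.

Lemma natmx_eq m n f g : all_lt2 m n (fun i j => f i j == g i j) -> natmx m n f = natmx m n g.
Proof.
move=> H; apply/matrixP => i j; rewrite !mxE; apply/eqP.
exact: (all_lt2P H (ltn_ord i) (ltn_ord j)).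
Qed.

Lemma natmx_of m n (A : 'M[rat]_(m.+1, n.+1)) :
  A = natmx m.+1 n.+1 (fun i j => A (inord i) (inord j)).
Proof. by apply/matrixP => i j; rewrite !mxE !inord_val. Qed.


Definition intmx m n (A : 'M[rat]_(m, n)) := forall i j, is_int (A i j).

Lemma intmxM m n p (A : 'M[rat]_(m, n)) (B : 'M[rat]_(n, p)) :
  intmx A -> intmx B -> intmx (A *m B).
Proof. by move=> HA HB i j; rewrite mxE; apply: is_int_sum => k; apply: is_intM. Qed.
Lemma intmxD m n (A B : 'M[rat]_(m, n)) : intmx A -> intmx B -> intmx (A + B).
Proof. by move=> HA HB i j; rewrite mxE; apply: is_intD. Qed.
Lemma intmxN m n (A : 'M[rat]_(m, n)) : intmx A -> intmx (- A).
Proof. by move=> HA i j; rewrite mxE; apply: is_intN. Qed.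
Lemma intmx0 m n : intmx (0 : 'M[rat]_(m, n)).
Proof. by move=> i j; rewrite mxE; exact: is_int0. Qed.
Lemma intmxZ m n (A : 'M[rat]_(m, n)) (z : int) : intmx A -> intmx (z%:~R *: A).
Proof. by move=> HA i j; rewrite mxE; apply: is_intM => //; apply: is_int_intr. Qed.
Lemma intmx_delta m n (i : 'I_m) (j : 'I_n) : intmx (delta_mx i j : 'M[rat]_(m, n)).
Proof. by move=> k l; rewrite mxE; exact: is_int_bit. Qed.

Lemma intmx_natmx m n f : all_lt2 m n (fun i j => f i j \is a Num.int) -> intmx (natmx m n f).
Proof.
by move=> H i j; rewrite natmxE; apply/is_intP; exact: (all_lt2P H (ltn_ord i) (ltn_ord j)).
Qed.

Lemma zspanP k n (A : 'M[rat]_(k, n)) x : zspan A x <-> exists2 c, intmx c & x = c *m A.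
Proof.
split.
  case=> c ->; exists (\row_i (c i)%:~R); first by move=> ? j; rewrite mxE; exact: is_int_intr.
  by rewrite mulmx_sum_row; apply: eq_bigr => i _; rewrite mxE.
case=> c Hc ->; exists (fun i => numq (c 0 i)); rewrite mulmx_sum_row.
by apply: eq_bigr => i _; rewrite numqK //; apply/is_intP.
Qed.

Section IntegralSpans.
Variables (k n : nat) (A : 'M[rat]_(k, n)).

Lemma zspanD x y : zspan A x -> zspan A y -> zspan A (x + y).
Proof.
move=> /zspanP [c Hc ->] /zspanP [d Hd ->]; apply/zspanP.
by exists (c + d); [apply: intmxD | rewrite mulmxDl].
Qed.
Lemma zspanN x : zspan A x -> zspan A (- x).
Proof. by move=> /zspanP [c Hc ->]; apply/zspanP; exists (- c); [apply: intmxN | rewrite mulNmx]. Qed.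
Lemma zspan0 : zspan A 0.
Proof. by apply/zspanP; exists 0; [apply: intmx0 | rewrite mul0mx]. Qed.
Lemma zspan_trans x y z : zspan A (x - y) -> zspan A (y - z) -> zspan A (x - z).
Proof. by move=> H1 H2; have := zspanD H1 H2; rewrite addrA subrK. Qed.
Lemma zspan_sym x y : zspan A (x - y) -> zspan A (y - x).
Proof. by move/zspanN; rewrite opprB. Qed.

End IntegralSpans.

Lemma zspan_mulmx k1 k2 n (A : 'M[rat]_(k1, n)) (B : 'M[rat]_(k2, n)) (D : 'M[rat]_(k1, k2)) x :
  A = D *m B -> intmx D -> zspan A x -> zspan B x.
Proof.
move=> -> HD /zspanP [c Hc ->]; apply/zspanP.
by exists (c *m D); rewrite ?mulmxA //; apply: intmxM.
Qed.

Section BilinearForm.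
Variables (n : nat) (B : 'M[rat]_n).

Lemma bformDl x y z : bform B (x + y) z = bform B x z + bform B y z.
Proof. by rewrite /bform !mulmxDl mxE. Qed.
Lemma bformDr x y z : bform B z (x + y) = bform B z x + bform B z y.
Proof. by rewrite /bform linearD mulmxDr mxE. Qed.
Lemma bformC x y : B^T = B -> bform B x y = bform B y x.
Proof.
move=> HB; rewrite /bform.
have -> : (x *m B *m y^T) 0 0 = ((x *m B *m y^T)^T) 0 0 by rewrite [RHS]mxE.
by rewrite trmx_mul trmxK trmx_mul HB mulmxA.
Qed.
Lemma bform_mulmx m (A : 'M[rat]_(m, n)) x y :
  bform B (x *m A) (y *m A) = bform (A *m B *m A^T) x y.
Proof. by rewrite /bform trmx_mul !mulmxA. Qed.
Lemma bform_addmx (C : 'M[rat]_n) x y : bform (B + C) x y = bform B x y + bform C x y.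
Proof. by rewrite /bform mulmxDr mulmxDl mxE. Qed.

End BilinearForm.

Lemma dualD n (B : 'M[rat]_n) (L : 'rV[rat]_n -> Prop) x y :
  dual B L x -> dual B L y -> dual B L (x + y).
Proof. by move=> Hx Hy z Hz; rewrite bformDl; apply: is_intD; [apply: Hx | apply: Hy]. Qed.

(** * The lattice M *)

Definition bk (a b : nat) : rat :=
  if a == b then (if a == 0%N then 0 else -2)
  else if ((a == 0%N) && (b == 1%N)) || ((a == 1%N) && (b == 0%N)) then 1 else 0.

Lemma BK_natmx : BK = natmx 10 10 bk.
Proof. by apply/matrixP => i j; rewrite !mxE. Qed.

Lemma tr_BK : BK^T = BK.
Proof. by rewrite BK_natmx tr_natmx; apply: natmx_eq; vm_compute. Qed.

Definition kcoord (x : 'rV[rat]_10) (j : nat) : rat := x 0 (inord j).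

Lemma kcoord_ord (x : 'rV[rat]_10) (j : 'I_10) : x 0 j = kcoord x j.
Proof. by rewrite /kcoord inord_val. Qed.
Lemma kcoord_natmx f j : (j < 10)%N -> kcoord (natmx 1 10 f) j = f 0%N j.
Proof. by move=> Hj; rewrite /kcoord natmxE inordK. Qed.
Lemma kcoordD (x y : 'rV[rat]_10) j : kcoord (x + y) j = kcoord x j + kcoord y j.
Proof. by rewrite /kcoord mxE. Qed.
Lemma kcoordN (x : 'rV[rat]_10) j : kcoord (- x) j = - kcoord x j.
Proof. by rewrite /kcoord mxE. Qed.
Lemma kcoordB (x y : 'rV[rat]_10) j : kcoord (x - y) j = kcoord x j - kcoord y j.
Proof. by rewrite kcoordD kcoordN. Qed.
Lemma kcoordZ a (x : 'rV[rat]_10) j : kcoord (a *: x) j = a * kcoord x j.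
Proof. by rewrite /kcoord mxE. Qed.

Lemma intmx_kcoord (x : 'rV[rat]_10) : (forall j, (j < 10)%N -> is_int (kcoord x j)) -> intmx x.
Proof. by move=> H i j; rewrite (ord1 i) kcoord_ord; apply: H. Qed.

Lemma bform_BK x y : bform BK x y =
  kcoord x 0 * kcoord y 1 + kcoord x 1 * kcoord y 0 - 2 * (kcoord x 1 * kcoord y 1)
  - 2 * (kcoord x 2 * kcoord y 2 + kcoord x 3 * kcoord y 3 + kcoord x 4 * kcoord y 4
       + kcoord x 5 * kcoord y 5 + kcoord x 6 * kcoord y 6 + kcoord x 7 * kcoord y 7
       + kcoord x 8 * kcoord y 8 + kcoord x 9 * kcoord y 9).
Proof.
rewrite /bform BK_natmx {1}(natmx_of x) {1}(natmx_of y) tr_natmx !mul_natmx natmxE /=.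
rewrite /natsum /kcoord; cbn [iota foldr].
have -> : (inord 0 : 'I_1) = 0 by apply/val_inj; rewrite /= inordK.
by rewrite /bk /=; set X := x 0; set Y := y 0; ring.
Qed.

Definition halfv : 'rV[rat]_10 := natmx 1 10 (fun _ j => if (2 <= j)%N then 1/2 else 0).

Lemma kcoord_halfv j : (j < 10)%N -> kcoord halfv j = if (2 <= j)%N then 1/2 else 0.
Proof. exact: kcoord_natmx. Qed.

Lemma PM_col : PM = col_mx 1%:M halfv.
Proof.
apply/matrixP => i j; rewrite mxE.
case: (@splitP 10 1 i) => k Hk.
  have -> : i = lshift 1 k by apply/val_inj.
  by rewrite (@col_mxEu _ 10 1 10) !mxE.
have -> : i = rshift 10 k by apply/val_inj.
by rewrite (@col_mxEd _ 10 1 10) !mxE /=.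
Qed.

Lemma MlatE (x : 'rV[rat]_10) :
  Mlat x <-> exists2 z, intmx z & exists t : int, x = z + t%:~R *: halfv.
Proof.
split.
  move=> /zspanP [c Hc ->].
  rewrite PM_col -(@hsubmxK _ 1 10 1 c) (@mul_row_col _ 1 10 1 10) mulmx1.
  exists (@lsubmx _ 1 10 1 c); first by move=> i j; rewrite mxE; apply: Hc.
  have [t Ht] : is_int ((@rsubmx _ 1 10 1 c) 0 0) by rewrite mxE; apply: Hc.
  exists t; congr (_ + _); apply/matrixP => i j.
  by rewrite (ord1 i) mxE big_ord1 Ht [in RHS]mxE.
case=> z Hz [t ->]; apply/zspanP; exists (row_mx z (t%:~R *: (1%:M : 'M_1))).
  move=> i j; rewrite mxE; case: (@splitP 10 1 j) => k _; first exact: Hz.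
  by rewrite !mxE; apply: is_intM; [exact: is_int_intr | exact: is_int_bit].
by rewrite PM_col (@mul_row_col _ 1 10 1 10) mulmx1 -scalemxAl mul1mx.
Qed.

Lemma intmx_halfv2 : intmx (2 *: halfv).
Proof.
apply: intmx_kcoord => j Hj; rewrite kcoordZ kcoord_halfv //.
case: (2 <= j)%N; last by rewrite mulr0; exact: is_int0.
by rewrite mul1r mulfV //; exact: is_int1.
Qed.

Lemma Mlat_halfv : Mlat halfv.
Proof. by apply/MlatE; exists 0; [exact: intmx0 | exists 1; rewrite add0r scale1r]. Qed.
Lemma Mlat_int (x : 'rV[rat]_10) : intmx x -> Mlat x.
Proof. by move=> H; apply/MlatE; exists x => //; exists 0; rewrite scale0r addr0. Qed.
Lemma Mlat_int_halfv (x : 'rV[rat]_10) : intmx (x - halfv) -> Mlat x.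
Proof. by move=> H; apply/MlatE; exists (x - halfv) => //; exists 1; rewrite scale1r subrK. Qed.

Lemma MlatP (x : 'rV[rat]_10) : Mlat x -> intmx x \/ intmx (x - halfv).
Proof.
case/MlatE => z Hz [t ->].
have [q [r [-> Hr]]] : exists q r : int, t = q * 2 + r /\ (r = 0 \/ r = 1).
  by exists (t %/ 2)%Z, (t %% 2)%Z; split; [exact: divz_eq | lia].
have -> : ((q * 2 + r)%:~R : rat) *: halfv = q%:~R *: (2 *: halfv) + r%:~R *: halfv.
  by rewrite intrD intrM scalerDl scalerA.
case: Hr => ->; [left | right].
  by rewrite scale0r addr0; apply: intmxD => //; apply: intmxZ intmx_halfv2.
by rewrite scale1r addrA addrK; apply: intmxD => //; apply: intmxZ intmx_halfv2.
Qed.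

Lemma Mlat_even_norm m : Mlat m -> is_int (bform BK m m / 2).
Proof.
have Hsq z : intmx z -> is_int (kcoord z 0 * kcoord z 1 - kcoord z 1 * kcoord z 1
   - (kcoord z 2 * kcoord z 2 + kcoord z 3 * kcoord z 3 + kcoord z 4 * kcoord z 4
      + kcoord z 5 * kcoord z 5 + kcoord z 6 * kcoord z 6 + kcoord z 7 * kcoord z 7
      + kcoord z 8 * kcoord z 8 + kcoord z 9 * kcoord z 9)).
  by move=> Hz; repeat (apply: is_intB || apply: is_intD || apply: is_intM); apply: Hz.
case/MlatP => Hm; first by apply: (is_int_eq (Hsq _ Hm)); rewrite bform_BK; field.
set z := m - halfv in Hm; have -> : m = z + halfv by rewrite /z subrK.
have Hs : is_int (kcoord z 2 + kcoord z 3 + kcoord z 4 + kcoord z 5 + kcoord z 6 + kcoord z 7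
   + kcoord z 8 + kcoord z 9 + 2) by apply: is_intD; [repeat apply: is_intD; apply: Hm | exists 2].
apply: (is_int_eq (is_intB (Hsq _ Hm) Hs)).
by rewrite bform_BK !kcoordD !kcoord_halfv //=; field.
Qed.

Lemma q_M_wd x y : dual BK Mlat x -> Mlat (y - x) -> eq_mod2 (bform BK y y) (bform BK x x).
Proof.
move=> Hx Hyx; have -> : y = x + (y - x) by rewrite addrC subrK.
move: (y - x) Hyx => m Hm.
have -> : bform BK (x + m) (x + m) = bform BK x x + 2 * (bform BK x m + bform BK m m / 2).
  by rewrite !bformDl !bformDr (bformC _ _ tr_BK : bform BK m x = _); field.
by apply: eq_mod2_addr; apply: is_intD; [exact: Hx | exact: Mlat_even_norm].
Qed.

Definition unitv (j : nat) : 'rV[rat]_10 := natmx 1 10 (fun _ k => (k == j)%:R).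

Lemma Mlat_unitv j : Mlat (unitv j).
Proof. by apply: Mlat_int => ? k; rewrite natmxE; exact: is_int_bit. Qed.

Lemma dual_M_coords x : dual BK Mlat x ->
  [/\ is_int (kcoord x 0), is_int (kcoord x 1),
      (forall j, (2 <= j < 10)%N -> is_int (2 * kcoord x j)) &
      is_int (kcoord x 2 + kcoord x 3 + kcoord x 4 + kcoord x 5
              + kcoord x 6 + kcoord x 7 + kcoord x 8 + kcoord x 9)].
Proof.
move=> Hx; have pair_unitv j : is_int (bform BK x (unitv j)) by apply: Hx; exact: Mlat_unitv.
have H1 : is_int (kcoord x 1).
  by apply: (is_int_eq (pair_unitv 0%N)); rewrite bform_BK !kcoord_natmx //=; ring.
split => //.
- have := is_intD (pair_unitv 1%N) (is_intM (is_int_nat 2) H1).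
  by move/is_int_eq; apply; rewrite bform_BK !kcoord_natmx //=; ring.
- move=> j /andP [Hj2 Hj10].
  have := is_intN (pair_unitv j); move/is_int_eq; apply.
  rewrite bform_BK !kcoord_natmx //=.
  by case: j Hj2 Hj10 => [|[|[|[|[|[|[|[|[|[|j]]]]]]]]]] //= _ _; ring.
- have := is_intN (Hx _ Mlat_halfv); move/is_int_eq; apply.
  by rewrite bform_BK !kcoord_halfv //=; field.
Qed.

Definition int_natmx m n (l : seq (seq int)) : 'M[rat]_(m, n) :=
  natmx m n (fun i j => (nth 0 (nth [::] l i) j)%:~R).

(* Doubled coordinates of a basis of M realising U(2) + D4 + D4, together with
   the integral matrices expressing the generators of M in that basis and back. *)
Definition Pbasis2 : seq (seq int) :=
 [:: [:: -8; -4; 0; 0; 0; -2; 2; 2; -2; 0];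
     [:: -12; -8; 0; 0; 0; -2; 4; 2; -2; 2];
     [:: 2; 2; 0; 0; 0; 0; 0; 0; 2; 0];
     [:: 4; 2; 0; 0; 0; 0; -2; -2; 0; 0];
     [:: -2; -2; 0; 0; 0; 0; 0; 2; 0; 0];
     [:: 2; 2; 0; 0; 0; 2; 0; 0; 0; 0];
     [:: 4; 2; 1; -1; 1; 1; -1; -1; 1; -1];
     [:: 4; 2; -1; 1; -1; 1; -1; -1; 1; -1];
     [:: -4; -2; 1; 1; 1; -1; 1; 1; -1; 1];
     [:: -4; -2; -1; -1; 1; -1; 1; 1; -1; 1]].
Definition PM_in_Pbasis : seq (seq int) :=
 [:: [:: -2; -1; -2; -3; -1; -2; -1; -1; 0; 0]; [:: 1; 0; 1; 1; 0; 1; 0; 0; 0; 0];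
     [:: 0; 0; 0; 0; 0; 0; 0; -1; 0; -1]; [:: 0; 0; 0; 0; 0; 0; 0; 1; 1; 0];
     [:: 0; 0; 0; 0; 0; 0; 1; 1; 1; 1]; [:: 1; 1; 1; 2; 1; 2; 1; 1; 0; 0];
     [:: -2; -1; -2; -4; -2; -2; -1; -1; 0; 0]; [:: -1; -1; -1; -2; 0; -1; -1; -1; 0; 0];
     [:: 1; 1; 2; 2; 1; 1; 1; 1; 0; 0]; [:: -1; 0; 0; 0; 0; 0; -1; -1; 0; 0];
     [:: -1; 0; 0; -1; 0; 0; 0; 0; 1; 0]].
Definition Pbasis_in_PM : seq (seq int) :=
 [:: [:: -4; -2; 0; 0; 0; -1; 1; 1; -1; 0; 0]; [:: -6; -4; 0; 0; 0; -1; 2; 1; -1; 1; 0];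
     [:: 1; 1; 0; 0; 0; 0; 0; 0; 1; 0; 0]; [:: 2; 1; 0; 0; 0; 0; -1; -1; 0; 0; 0];
     [:: -1; -1; 0; 0; 0; 0; 0; 1; 0; 0; 0]; [:: 1; 1; 0; 0; 0; 1; 0; 0; 0; 0; 0];
     [:: 2; 1; 0; -1; 0; 0; -1; -1; 0; -1; 1]; [:: 2; 1; -1; 0; -1; 0; -1; -1; 0; -1; 1];
     [:: -2; -1; 0; 0; 0; -1; 0; 0; -1; 0; 1]; [:: -2; -1; -1; -1; 0; -1; 0; 0; -1; 0; 1]].

Definition pbasis (i j : nat) : rat := (nth 0 (nth [::] Pbasis2 i) j)%:~R / 2.
Definition Pbasis : 'M[rat]_10 := natmx 10 10 pbasis.

Lemma PM_natmx : PM = natmx 11 10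
  (fun a b => if (a < 10)%N then (a == b)%:R else if (2 <= b)%N then 1/2 else 0).
Proof. by apply/matrixP => i j; rewrite !mxE. Qed.

Lemma Pbasis_gram : Pbasis *m BK *m Pbasis^T = BM0.
Proof.
have -> : BM0 = natmx 10 10 (fun a b =>
    if (a < 2)%N && (b < 2)%N then (if a == b then 0 else 2)
    else if (2 <= a < 6)%N && (2 <= b < 6)%N then d4 (a - 2) (b - 2)
    else if (6 <= a)%N && (6 <= b)%N then d4 (a - 6) (b - 6) else 0).
  by apply/matrixP => i j; rewrite !mxE.
by rewrite BK_natmx /Pbasis tr_natmx !mul_natmx; apply: natmx_eq; vm_compute.
Qed.

Lemma PM_Pbasis : PM = int_natmx 11 10 PM_in_Pbasis *m Pbasis.
Proof. by rewrite PM_natmx /Pbasis mul_natmx; apply: natmx_eq; vm_compute. Qed.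

Lemma Pbasis_PM : Pbasis = int_natmx 10 11 Pbasis_in_PM *m PM.
Proof. by rewrite PM_natmx /Pbasis mul_natmx; apply: natmx_eq; vm_compute. Qed.

Lemma Mlat_int_Pbasis (c : 'rV[rat]_10) : intmx c -> Mlat (c *m Pbasis).
Proof.
move=> Hc; apply: (zspan_mulmx Pbasis_PM); first by apply: intmx_natmx; vm_compute.
by apply/zspanP; exists c.
Qed.

Lemma Mlat_row_Pbasis i : Mlat (row i Pbasis).
Proof. by rewrite rowE; apply: Mlat_int_Pbasis; exact: intmx_delta. Qed.

Lemma Mlat_zspan_Pbasis x : Mlat x -> zspan Pbasis x.
Proof. by apply: (zspan_mulmx PM_Pbasis); apply: intmx_natmx; vm_compute. Qed.

(** * Binary words of length 8 *)

(* Words of length 8 over F_2 model subsets of {F_1, ..., F_8}.  Even words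
   modulo the all-ones word carry the form [bw] and the quadratic refinement [qw];
   this is the discriminant form of M. *)
Definition even_word (v : seq bool) := (size v == 8%N) && ~~ odd (count id v).
Definition complw (v : seq bool) := map negb v.
Definition congw (v w : seq bool) := (v == w) || (v == complw w).
Definition addw (v w : seq bool) : seq bool := [seq p.1 (+) p.2 | p <- zip v w].
Definition bw (v w : seq bool) : bool := odd (count id [seq p.1 && p.2 | p <- zip v w]).
Definition qw (v : seq bool) : bool := odd (count id v)./2.
Definition zerow : seq bool := nseq 8 false.
Definition pairw (a b : nat) : seq bool := mkseq (fun k => (k == a) || (k == b)) 8.
Definition chainw (i : nat) : seq bool := pairw i i.+1.
Definition normw (v : seq bool) := if nth false v 7 then complw v else v.
Definition permw (s : 'S_8) (v : seq bool) : seq bool :=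
  mkseq (fun k => nth false v (s^-1 (inord k))%g) 8.

Lemma even_word_size v : even_word v -> size v = 8%N.
Proof. by case/andP => /eqP. Qed.

Lemma size_addw v w : size (addw v w) = minn (size v) (size w).
Proof. by rewrite size_map size_zip. Qed.
Lemma size_complw v : size (complw v) = size v. Proof. by rewrite size_map. Qed.
Lemma size_permw s v : size (permw s v) = 8%N. Proof. by rewrite size_mkseq. Qed.

Lemma complwK v : complw (complw v) = v.
Proof. by rewrite /complw -map_comp map_id_in // => x _ /=; rewrite negbK. Qed.
Lemma addw_complwl v w : size v = size w -> addw (complw v) w = complw (addw v w).
Proof. elim: v w => [|a v IH] [|b w] // [E] /=; congr (_ :: _); [by case: a; case: b | exact: IH E]. Qed.
Lemma addw_complwr v w : size v = size w -> addw v (complw w) = complw (addw v w).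
Proof. elim: v w => [|a v IH] [|b w] // [E] /=; congr (_ :: _); [by case: a; case: b | exact: IH E]. Qed.
Lemma addww v : addw v v = nseq (size v) false.
Proof. by elim: v => [|a v IH] //=; congr (_ :: _); [case: a | exact: IH]. Qed.
Lemma nth_addw v w k : size v = size w -> nth false (addw v w) k = nth false v k (+) nth false w k.
Proof. by elim: v w k => [|a v IH] [|b w] [|k] //= [E]; exact: IH. Qed.

Lemma congw_refl v : congw v v. Proof. by rewrite /congw eqxx. Qed.
Lemma congw_sym v w : congw v w -> congw w v.
Proof. by case/orP => /eqP ->; rewrite /congw ?eqxx // complwK eqxx orbT. Qed.
Lemma congw_trans u v w : congw u v -> congw v w -> congw u w.
Proof.
case/orP => /eqP -> //; case/orP => /eqP ->; rewrite /congw ?eqxx ?orbT //.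
by rewrite complwK eqxx.
Qed.
Lemma congw_addw v v' w w' : size v = 8%N -> size v' = 8%N -> size w = 8%N -> size w' = 8%N ->
  congw v v' -> congw w w' -> congw (addw v w) (addw v' w').
Proof.
move=> Hv Hv' Hw Hw'.
case/orP => /eqP ->; case/orP => /eqP ->; rewrite /congw.
- by rewrite eqxx.
- by rewrite addw_complwr ?Hv' ?Hw' // eqxx orbT.
- by rewrite addw_complwl ?Hv' ?Hw' // eqxx orbT.
by rewrite addw_complwl ?size_complw ?Hv' ?Hw' // addw_complwr ?Hv' ?Hw' // complwK eqxx.
Qed.

Lemma nth_permw s v k : (k < 8)%N -> nth false (permw s v) k = nth false v (s^-1 (inord k))%g.
Proof. by move=> Hk; rewrite nth_mkseq. Qed.

Lemma permw_addw s v w : size v = 8%N -> size w = 8%N ->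
  permw s (addw v w) = addw (permw s v) (permw s w).
Proof.
move=> Hv Hw; apply: (eq_from_nth (x0 := false)); first by rewrite size_addw !size_permw.
move=> k; rewrite size_permw => Hk.
by rewrite nth_addw ?size_permw // !nth_permw // nth_addw ?Hv ?Hw.
Qed.

Lemma permw_complw s v : size v = 8%N -> permw s (complw v) = complw (permw s v).
Proof.
move=> Hv; apply: (eq_from_nth (x0 := false)); first by rewrite size_complw !size_permw.
move=> k; rewrite size_permw => Hk.
by rewrite (nth_map false) ?size_permw // !nth_permw // (nth_map false) // Hv ltn_ord.
Qed.

Lemma congw_permw s v w : size w = 8%N -> congw v w -> congw (permw s v) (permw s w).
Proof.
move=> Hw; case/orP => /eqP ->; first exact: congw_refl.
by rewrite permw_complw // /congw eqxx orbT.
Qed.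

Lemma count_mkseq (f : nat -> bool) n : count id (mkseq f n) = (\sum_(k < n) f k)%N.
Proof.
elim: n => [|n IH]; first by rewrite big_ord0.
have E : iota 0 n.+1 = iota 0 n ++ [:: n] by rewrite -addn1 iotaD.
by rewrite big_ord_recr -IH /mkseq E map_cat count_cat /= addn0.
Qed.

Lemma count_permw s v : size v = 8%N -> count id (permw s v) = count id v.
Proof.
move=> Hv; rewrite count_mkseq -{2}(mkseq_nth false v) Hv count_mkseq.
rewrite [RHS](reindex_inj (@perm_inj _ (s^-1)%g)) /=.
by apply: eq_bigr => k _; rewrite inord_val.
Qed.

Lemma permw_even s v : even_word v -> even_word (permw s v).
Proof. by case/andP => /eqP Hv He; rewrite /even_word size_permw count_permw. Qed.

Lemma permw_pairw s a b : (a < 8)%N -> (b < 8)%N ->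
  permw s (pairw a b) = pairw (s (inord a)) (s (inord b)).
Proof.
move=> Ha Hb; apply: (eq_from_nth (x0 := false)); first by rewrite size_permw size_mkseq.
move=> k; rewrite size_permw => Hk; rewrite nth_permw // !nth_mkseq //.
have perm_nat c : (c < 8)%N -> ((s^-1)%g (inord k) == c :> nat) = (k == s (inord c) :> nat).
  move=> Hc; apply/eqP/eqP => E.
    have -> : (inord c : 'I_8) = (s^-1)%g (inord k) by apply: ord_inj; rewrite inordK.
    by rewrite permKV inordK.
  have -> : (inord k : 'I_8) = s (inord c) by apply: ord_inj; rewrite inordK.
  by rewrite permK inordK.
by rewrite !perm_nat.
Qed.

Fixpoint words (n : nat) : seq (seq bool) :=
  if n is n'.+1 then [seq b :: v | b <- [:: false; true], v <- words n'] else [:: [::]].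

Lemma mem_words (v : seq bool) : v \in words (size v).
Proof. by elim: v => [|b v IH] //=; case: b; rewrite !mem_cat (map_f _ IH) ?orbT. Qed.

Lemma all_wordsP (P : pred (seq bool)) : all P (words 8) -> forall v, size v = 8%N -> P v.
Proof. by move=> /allP H v Hv; apply: H; rewrite -Hv mem_words. Qed.

Lemma all_words2P (P : rel (seq bool)) : all (fun v => all (P v) (words 8)) (words 8) ->
  forall v w, size v = 8%N -> size w = 8%N -> P v w.
Proof. by move=> H v w /(all_wordsP H) /all_wordsP; apply. Qed.

Lemma addw_even v w : even_word v -> even_word w -> even_word (addw v w).
Proof.
move=> Hv Hw; have := all_words2P (P := fun v w => even_word v ==> even_word w ==>
  even_word (addw v w)) _ (even_word_size Hv) (even_word_size Hw).
by move=> /(_ ltac:(by vm_compute)); rewrite Hv Hw.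
Qed.

Lemma qw_addw v w : even_word v -> even_word w -> qw (addw v w) = qw v (+) qw w (+) bw v w.
Proof.
move=> Hv Hw; apply/eqP.
have := all_words2P (P := fun v w => even_word v ==> even_word w ==>
  (qw (addw v w) == qw v (+) qw w (+) bw v w)) _ (even_word_size Hv) (even_word_size Hw).
by move=> /(_ ltac:(by vm_compute)); rewrite Hv Hw.
Qed.

Lemma qw_congw v w : even_word v -> even_word w -> congw v w -> qw v = qw w.
Proof.
move=> Hv Hw; have := all_words2P (P := fun v w => even_word v ==> even_word w ==>
  congw v w ==> (qw v == qw w)) _ (even_word_size Hv) (even_word_size Hw).
by move=> /(_ ltac:(by vm_compute)); rewrite Hv Hw /= => /implyP H /H /eqP.
Qed.

Lemma normwP v : even_word v ->
  [/\ even_word (normw v), congw (normw v) v, qw (normw v) = qw v & ~~ nth false (normw v) 7].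
Proof.
move=> Hv; have := all_wordsP (P := fun v => even_word v ==> [&& even_word (normw v),
  congw (normw v) v, qw (normw v) == qw v & ~~ nth false (normw v) 7]) _ (even_word_size Hv).
by move=> /(_ ltac:(by vm_compute)); rewrite Hv /= => /and4P [? ? /eqP ? ?].
Qed.

Lemma bw_normw v w : even_word v -> even_word w -> bw (normw v) (normw w) = bw v w.
Proof.
move=> Hv Hw; apply/eqP.
have := all_words2P (P := fun v w => even_word v ==> even_word w ==>
  (bw (normw v) (normw w) == bw v w)) _ (even_word_size Hv) (even_word_size Hw).
by move=> /(_ ltac:(by vm_compute)); rewrite Hv Hw.
Qed.

Lemma pairwP a b c d : (a < 8)%N -> (b < 8)%N -> (c < 8)%N -> (d < 8)%N -> a != b ->
  even_word (pairw a b) /\ (congw (pairw a b) (pairw c d) -> (a == c) || (a == d)).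
Proof.
move=> Ha Hb Hc Hd Hab.
have := @all_lt2P 8 8 (fun a b => all_lt2 8 8 (fun c d => (a != b) ==> even_word (pairw a b) &&
  (congw (pairw a b) (pairw c d) ==> (a == c) || (a == d)))) ltac:(by vm_compute) _ _ Ha Hb.
by move=> /all_lt2P /(_ _ _ Hc Hd); rewrite Hab /= => /andP [-> /implyP].
Qed.

Lemma even_zerow : even_word zerow. Proof. by []. Qed.
Lemma even_chainw i : (i < 7)%N -> even_word (chainw i).
Proof.
move=> Hi; have Ha : (i < 8)%N by lia.
by case: (@pairwP i i.+1 0 0 Ha Hi isT isT (negbT (ltn_eqF (ltnSn i)))).
Qed.

(* The six words [chainw i], i < 6, form a basis of the even words modulo the
   all-ones word. *)
Definition chain_fold (c : seq bool) (l : seq nat) : seq bool :=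
  foldr (fun i acc => if nth false c i then addw (chainw i) acc else acc) zerow l.
Definition chain_comb (c : seq bool) : seq bool := chain_fold c (iota 0 6).
Definition chain_coeffs (v : seq bool) : seq bool :=
  [seq odd (count id (take i.+1 (normw v))) | i <- iota 0 6].

Lemma congw_chain_coeffs v : even_word v -> congw v (chain_comb (chain_coeffs v)).
Proof.
move=> Hv; have := all_wordsP (P := fun v => even_word v ==> congw v (chain_comb (chain_coeffs v)))
  ltac:(by vm_compute) (even_word_size Hv).
by rewrite Hv.
Qed.

Lemma chain_fold_even c l : all (fun i => i < 6)%N l -> even_word (chain_fold c l).
Proof.
elim: l => [|i l IH] //= /andP [Hi /IH Hl]; case: (nth false c i) => //.
by apply: addw_even Hl; apply: even_chainw; lia.
Qed.

Lemma chain_comb_even c : even_word (chain_comb c).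
Proof. exact: chain_fold_even. Qed.

Definition additive_mod_compl (G : seq bool -> seq bool) :=
  [/\ forall u, even_word u -> even_word (G u),
      forall u w, even_word u -> even_word w -> congw u w -> congw (G u) (G w) &
      forall u w, even_word u -> even_word w -> congw (G (addw u w)) (addw (G u) (G w))].

Lemma additive_zerow G : additive_mod_compl G -> congw (G zerow) zerow.
Proof.
case=> Hev _ Hx; have := Hx _ _ even_zerow even_zerow.
by rewrite !addww (even_word_size (Hev _ even_zerow)).
Qed.

Lemma permw_additive s : additive_mod_compl (permw s).
Proof.
split; first exact: permw_even.
  by move=> u w _ Hw; apply: congw_permw; exact: even_word_size.
by move=> u w Hu Hw; rewrite permw_addw ?even_word_size //; exact: congw_refl.
Qed.

Section ChainExtension.
Variables (G1 G2 : seq bool -> seq bool).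
Hypotheses (G1_add : additive_mod_compl G1) (G2_add : additive_mod_compl G2).
Hypothesis G12_chain : forall i, (i < 6)%N -> congw (G1 (chainw i)) (G2 (chainw i)).

Lemma congw_chain_fold c l : all (fun i => i < 6)%N l ->
  congw (G1 (chain_fold c l)) (G2 (chain_fold c l)).
Proof.
case: G1_add G2_add => [G1ev _ G1x] [G2ev _ G2x].
elim: l => [_|i l IH /= /andP [Hi Hl]].
  exact: congw_trans (additive_zerow G1_add) (congw_sym (additive_zerow G2_add)).
have {}IH := IH Hl; have Hr := chain_fold_even c Hl; case: (nth false c i) => //.
have Hb : even_word (chainw i) by apply: even_chainw; lia.
apply: congw_trans (G1x _ _ Hb Hr) _; apply: congw_sym; apply: congw_trans (G2x _ _ Hb Hr) _.
apply: congw_addw; try (apply: even_word_size; by [apply: G1ev | apply: G2ev]).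
  exact: congw_sym (G12_chain Hi).
exact: congw_sym IH.
Qed.

Lemma congw_of_chain v : even_word v -> congw (G1 v) (G2 v).
Proof.
case: G1_add G2_add => [_ G1c _] [_ G2c _] Hv.
have Hd := congw_chain_coeffs Hv; have Hc := chain_comb_even (chain_coeffs v).
apply: congw_trans (G1c _ _ Hv Hc Hd) _.
apply: congw_trans (congw_chain_fold (chain_coeffs v) (l := iota 0 6) isT) _.
exact: congw_sym (G2c _ _ Hv Hc Hd).
Qed.

End ChainExtension.

Lemma qw_chainw i : (i < 6)%N -> qw (chainw i).
Proof. by case: i => [|[|[|[|[|[|i]]]]]]. Qed.

(* An exhaustive search: every chain of six q-odd classes, each meeting only its
   neighbours under [bw] (the A_6 pattern of the [chainw i]), is the class-wise
   image of the standard chain under a permutation of the eight letters.  The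
   candidate permutation [chain_labels] is read off the weight-2 representatives. *)
Definition qodd_reps : seq (seq bool) :=
  [seq v <- words 8 | [&& even_word v, ~~ nth false v 7 & qw v]].

Definition weight2_rep (a : seq bool) := if count id a == 6 then complw a else a.
Definition common_index (p q : seq bool) := find id [seq x.1 && x.2 | x <- zip p q].
Definition other_index (p : seq bool) (c : nat) :=
  find id [seq (nth false p k) && (k != c) | k <- iota 0 8].

Definition chain_labels (l : seq (seq bool)) : seq nat :=
  let P := map weight2_rep l in
  let s1 := common_index (nth [::] P 0) (nth [::] P 1) in
  let s2 := common_index (nth [::] P 1) (nth [::] P 2) in
  let s3 := common_index (nth [::] P 2) (nth [::] P 3) in
  let s4 := common_index (nth [::] P 3) (nth [::] P 4) in
  let s5 := common_index (nth [::] P 4) (nth [::] P 5) in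
  let s0 := other_index (nth [::] P 0) s1 in
  let s6 := other_index (nth [::] P 5) s5 in
  let s7 := find (fun k => k \notin [:: s0; s1; s2; s3; s4; s5; s6]) (iota 0 8) in
  [:: s0; s1; s2; s3; s4; s5; s6; s7].

Definition is_chain_of_pairs (l : seq (seq bool)) : bool :=
  let sl := chain_labels l in
  uniq sl && all (fun i => i < 8)%N sl &&
  all (fun i => congw (nth [::] l i) (pairw (nth 0%N sl i) (nth 0%N sl i.+1))) (iota 0 6).

Definition chain_search : bool :=
  all (fun a0 =>
  all (fun a1 => if bw a0 a1 then
  all (fun a2 => if bw a1 a2 && ~~ bw a0 a2 then
  all (fun a3 => if bw a2 a3 && ~~ bw a0 a3 && ~~ bw a1 a3 then
  all (fun a4 => if bw a3 a4 && ~~ bw a0 a4 && ~~ bw a1 a4 && ~~ bw a2 a4 then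
  all (fun a5 => if bw a4 a5 && ~~ bw a0 a5 && ~~ bw a1 a5 && ~~ bw a2 a5 && ~~ bw a3 a5 then
     is_chain_of_pairs [:: a0; a1; a2; a3; a4; a5] else true) qodd_reps
  else true) qodd_reps else true) qodd_reps else true) qodd_reps else true) qodd_reps)
  qodd_reps.

Lemma chain_searchP : chain_search.
Proof. by vm_compute. Qed.

Lemma mem_qodd_reps v : even_word v -> ~~ nth false v 7 -> qw v -> v \in qodd_reps.
Proof. by move=> Hv H7 Hq; rewrite mem_filter Hv H7 Hq -(even_word_size Hv) mem_words. Qed.

Lemma chain_searchE a0 a1 a2 a3 a4 a5 :
  all (mem qodd_reps) [:: a0; a1; a2; a3; a4; a5] ->
  bw a0 a1 -> bw a1 a2 -> ~~ bw a0 a2 -> bw a2 a3 -> ~~ bw a0 a3 -> ~~ bw a1 a3 ->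
  bw a3 a4 -> ~~ bw a0 a4 -> ~~ bw a1 a4 -> ~~ bw a2 a4 ->
  bw a4 a5 -> ~~ bw a0 a5 -> ~~ bw a1 a5 -> ~~ bw a2 a5 -> ~~ bw a3 a5 ->
  is_chain_of_pairs [:: a0; a1; a2; a3; a4; a5].
Proof.
rewrite /= !andbT => /and5P [H0 H1 H2 H3 /andP [H4 H5]].
move=> B01 B12 B02 B23 B03 B13 B34 B04 B14 B24 B45 B05 B15 B25 B35.
have := chain_searchP.
move/allP/(_ a0 H0)/allP/(_ a1 H1); rewrite B01.
move/allP/(_ a2 H2); rewrite B12 (negbTE B02).
move/allP/(_ a3 H3); rewrite B23 (negbTE B03) (negbTE B13).
move/allP/(_ a4 H4); rewrite B34 (negbTE B04) (negbTE B14) (negbTE B24).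
move/allP/(_ a5 H5); by rewrite B45 (negbTE B05) (negbTE B15) (negbTE B25) (negbTE B35).
Qed.

Lemma chain_of_pairs_perm l : is_chain_of_pairs l ->
  exists s : 'S_8, forall i, (i < 6)%N -> congw (nth [::] l i) (permw s (chainw i)).
Proof.
rewrite /is_chain_of_pairs; set sl := chain_labels l; case/andP => /andP [Hu Ha] Hs.
have Hsz : size sl = 8%N by [].
have Hlt i : (i < 8)%N -> (nth 0%N sl i < 8)%N.
  by move=> Hi; move/all_nthP: Ha; apply; rewrite Hsz.
pose f := fun (i : 'I_8) => (inord (nth 0%N sl i) : 'I_8).
have f_inj : injective f.
  move=> i j /(congr1 (@nat_of_ord 8)); rewrite /f !inordK ?Hlt //.
  by move/eqP; rewrite nth_uniq ?Hsz // => /eqP; exact: ord_inj.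
exists (perm f_inj) => i Hi; rewrite /chainw permw_pairw; try lia.
rewrite !permE /f !inordK ?Hlt; try lia.
by move/allP: Hs; apply; rewrite mem_iota.
Qed.

(** * The discriminant form of M *)

(* Every class of M^*/M is represented by some [halfvec v] with v of even weight
   ([dual_sub_frac], [frac_bits_even]). *)
Definition halfvec (v : seq bool) : 'rV[rat]_10 :=
  natmx 1 10 (fun _ j => if (2 <= j)%N then (nth false v (j - 2)%N)%:R / 2 else 0).
Definition frac_bits (x : 'rV[rat]_10) : seq bool :=
  mkseq (fun k => kcoord x (k + 2) \isn't a Num.int) 8.

Lemma size_frac_bits x : size (frac_bits x) = 8%N. Proof. by rewrite size_mkseq. Qed.

Lemma kcoord_halfvec v j : (j < 10)%N ->
  kcoord (halfvec v) j = if (2 <= j)%N then (nth false v (j - 2)%N)%:R / 2 else 0.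
Proof. exact: kcoord_natmx. Qed.

Lemma size8P (v : seq bool) : size v = 8%N ->
  exists b0 b1 b2 b3 b4 b5 b6 b7, v = [:: b0; b1; b2; b3; b4; b5; b6; b7].
Proof.
case: v => [|b0 [|b1 [|b2 [|b3 [|b4 [|b5 [|b6 [|b7 [|b8 v]]]]]]]]] //= _.
by exists b0, b1, b2, b3, b4, b5, b6, b7.
Qed.

Lemma count8 (b0 b1 b2 b3 b4 b5 b6 b7 : bool) :
  (count id [:: b0; b1; b2; b3; b4; b5; b6; b7])%:R =
  b0%:R + b1%:R + b2%:R + b3%:R + b4%:R + b5%:R + b6%:R + b7%:R :> rat.
Proof. by rewrite /= !natrD ?addn0 ?addr0 !addrA. Qed.

Lemma dual_sub_frac x : dual BK Mlat x -> intmx (x - halfvec (frac_bits x)).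
Proof.
case/dual_M_coords => H0 H1 H2 _; apply: intmx_kcoord => j Hj.
rewrite kcoordB kcoord_halfvec //.
case: j Hj => [|[|j]] Hj /=; rewrite ?subr0 //.
rewrite !subSS subn0 /frac_bits nth_mkseq; last by lia.
by rewrite addn2; apply: is_int_sub_frac; apply: H2; lia.
Qed.

Lemma frac_bits_even x : dual BK Mlat x -> even_word (frac_bits x).
Proof.
move=> Hd; have Hz := dual_sub_frac Hd; case/dual_M_coords: Hd => _ _ _ Hs.
rewrite /even_word size_frac_bits eqxx andTb; apply/is_int_halfP.
have [b0 [b1 [b2 [b3 [b4 [b5 [b6 [b7 Eb]]]]]]]] := size8P (size_frac_bits x).
set z := x - halfvec (frac_bits x) in Hz.
have Ex j : kcoord x j = kcoord z j + kcoord (halfvec (frac_bits x)) j.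
  by rewrite /z kcoordB subrK.
move: Hs; rewrite !Ex !kcoord_halfvec // Eb /= => Hs.
have Hzs : is_int (kcoord z 2 + kcoord z 3 + kcoord z 4 + kcoord z 5 + kcoord z 6
  + kcoord z 7 + kcoord z 8 + kcoord z 9) by repeat apply: is_intD; apply: Hz.
by apply: (is_int_eq (is_intB Hs Hzs)); rewrite count8; field.
Qed.

Lemma bform_halfvec_int v z : size v = 8%N -> intmx z -> is_int (bform BK (halfvec v) z).
Proof.
move=> Hs Hz; have [b0 [b1 [b2 [b3 [b4 [b5 [b6 [b7 ->]]]]]]]] := size8P Hs.
have H : is_int (- (b0%:R * kcoord z 2 + b1%:R * kcoord z 3 + b2%:R * kcoord z 4
  + b3%:R * kcoord z 5 + b4%:R * kcoord z 6 + b5%:R * kcoord z 7 + b6%:R * kcoord z 8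
  + b7%:R * kcoord z 9)).
  by apply: is_intN; repeat apply: is_intD; apply: is_intM; (exact: is_int_bit || apply: Hz).
by apply: (is_int_eq H); rewrite bform_BK !kcoord_halfvec //=; field.
Qed.

Lemma bform_halfvec_halfv v : size v = 8%N -> bform BK (halfvec v) halfv = - (count id v)%:R / 2.
Proof.
move=> Hs; have [b0 [b1 [b2 [b3 [b4 [b5 [b6 [b7 ->]]]]]]]] := size8P Hs.
by rewrite count8 bform_BK !kcoord_halfvec // !kcoord_halfv //=; field.
Qed.

Lemma bform_halfvec_self v : size v = 8%N ->
  bform BK (halfvec v) (halfvec v) = - (count id v)%:R / 2.
Proof.
move=> Hs; have [b0 [b1 [b2 [b3 [b4 [b5 [b6 [b7 ->]]]]]]]] := size8P Hs.
have sq (b : bool) : (b%:R / 2) * (b%:R / 2) = (b%:R : rat) / 4 by case: b => /=; field.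
by rewrite count8 bform_BK !kcoord_halfvec //= !sq; field.
Qed.

Lemma halfvec_dual v : even_word v -> dual BK Mlat (halfvec v).
Proof.
case/andP => /eqP Hs He y /MlatP [Hy|Hy]; first exact: bform_halfvec_int.
rewrite -(subrK halfv y) bformDr; apply: is_intD; first exact: bform_halfvec_int.
by rewrite bform_halfvec_halfv // mulNr; apply: is_intN; apply/is_int_halfP.
Qed.

Lemma Mlat_halfvec_subP v w : size v = 8%N -> size w = 8%N ->
  Mlat (halfvec v - halfvec w) <-> congw v w.
Proof.
have bit_neq (b c : bool) : is_int ((b%:R - c%:R) / 2 - 1 / 2) -> b = ~~ c.
  by case: b; case: c => //= /is_intP.
move=> Hv Hw; split.
  case/MlatP => H; apply/orP; [left | right]; apply/eqP.
    apply: (eq_from_nth (x0 := false)) => [|k]; first by rewrite Hv Hw.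
    rewrite Hv => Hk; apply: bit_eq_of_is_int; have := H 0 (inord (k + 2)).
    rewrite kcoord_ord inordK ?kcoordB ?kcoord_halfvec; try lia.
    have -> : (1 < k + 2)%N by lia.
    by rewrite addnK => /is_int_eq; apply; field.
  apply: (eq_from_nth (x0 := false)) => [|k]; first by rewrite size_map Hv Hw.
  rewrite Hv => Hk; rewrite (nth_map false) ?Hw //; apply: (bit_neq).
  have := H 0 (inord (k + 2)).
  rewrite kcoord_ord inordK ?kcoordB ?kcoord_halfvec ?kcoord_halfv; try lia.
  have -> : (1 < k + 2)%N by lia.
  by rewrite addnK => /is_int_eq; apply; field.
case/orP => /eqP ->; first by rewrite subrr; exact: zspan0.
apply: Mlat_int_halfv; apply: intmx_kcoord => j Hj.
rewrite !kcoordB !kcoord_halfvec // kcoord_halfv //; case: ifP => _; last first.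
  by rewrite !subr0; exact: is_int0.
rewrite (nth_map false); last by rewrite Hw; lia.
by case: (nth false w (j - 2)); apply/is_intP.
Qed.

Lemma intmx_halfvec_addw v w : size v = 8%N -> size w = 8%N ->
  intmx (halfvec v + halfvec w - halfvec (addw v w)).
Proof.
move=> Hv Hw; apply: intmx_kcoord => j Hj; rewrite kcoordB kcoordD !kcoord_halfvec //.
case: ifP => _; last by rewrite ?addr0 ?subr0; exact: is_int0.
rewrite nth_addw ?Hv ?Hw //.
by case: (nth false v _); case: (nth false w _); apply/is_intP.
Qed.

Lemma qw_eq_mod2 v w : even_word v -> even_word w ->
  eq_mod2 (bform BK (halfvec v) (halfvec v)) (bform BK (halfvec w) (halfvec w)) -> qw v = qw w.
Proof.
case/andP => /eqP Hv Hev /andP [/eqP Hw Hew]; rewrite !bform_halfvec_self // /eq_mod2 => H.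
apply: odd_eq_of_is_int; apply: (is_int_eq (is_intN H)).
by rewrite -{1}(even_halfK Hev) -{1}(even_halfK Hew) -!muln2 !natrM; field.
Qed.

Lemma permF_val (s : 'S_8) (k : 'I_10) :
  permF s k = (if (k < 2)%N then nat_of_ord k else s (inord (k - 2)) + 2)%N :> nat.
Proof.
rewrite /permF /=; case: ifP => // _; rewrite inordK //.
by have := ltn_ord (s (inord (k - 2))); lia.
Qed.

Lemma permF_inj (s : 'S_8) : injective (permF s).
Proof.
move=> k l E; apply: ord_inj; have := congr1 (@nat_of_ord 10) E; rewrite !permF_val.
case: ifP => Hk; case: ifP => Hl //.
- by have := ltn_ord (s (inord (l - 2))); lia.
- by have := ltn_ord (s (inord (k - 2))); lia.
move/eqP; rewrite eqn_add2r => /eqP /ord_inj /perm_inj /(congr1 (@nat_of_ord 8)).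
by rewrite !inordK; [lia | have := ltn_ord l; lia | have := ltn_ord k; lia].
Qed.

Definition basis_perm (s : 'S_8) : 'S_10 := perm (@permF_inj s).

Lemma basis_perm_val (s : 'S_8) (k : 'I_10) :
  basis_perm s k = (if (k < 2)%N then nat_of_ord k else s (inord (k - 2)) + 2)%N :> nat.
Proof. by rewrite permE permF_val. Qed.

Lemma gperm_perm_mx s : gperm s = perm_mx (basis_perm s).
Proof. by apply/matrixP => i j; rewrite !mxE permE. Qed.

Lemma basis_permM s t : basis_perm (s * t)%g = (basis_perm s * basis_perm t)%g.
Proof.
apply/permP => k; apply: ord_inj; rewrite permM !basis_perm_val.
case: ifP => Hk; first by rewrite Hk.
by rewrite ifF; [rewrite permM addnK inord_val | lia].
Qed.

Lemma basis_perm1 : basis_perm 1%g = 1%g.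
Proof.
apply/permP => k; apply: ord_inj; rewrite basis_perm_val !perm1.
by case: ifP => // Hk; rewrite inordK; [lia | have := ltn_ord k; lia].
Qed.

Lemma gpermM s t : gperm (s * t)%g = gperm s *m gperm t.
Proof. by rewrite !gperm_perm_mx basis_permM perm_mxM. Qed.
Lemma gperm1 : gperm 1%g = 1%:M.
Proof. by rewrite gperm_perm_mx basis_perm1 perm_mx1. Qed.
Lemma gpermVK s (y : 'rV[rat]_10) : y *m gperm (s^-1)%g *m gperm s = y.
Proof. by rewrite -mulmxA -gpermM mulVg gperm1 mulmx1. Qed.
Lemma gpermKV s (y : 'rV[rat]_10) : y *m gperm s *m gperm (s^-1)%g = y.
Proof. by rewrite -mulmxA -gpermM mulgV gperm1 mulmx1. Qed.

Lemma mul_gpermE (x : 'rV[rat]_10) s j : (x *m gperm s) 0 j = x 0 (basis_perm (s^-1)%g j).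
Proof.
have Hj : basis_perm s (basis_perm (s^-1)%g j) = j.
  by rewrite -permM -basis_permM mulVg basis_perm1 perm1.
rewrite gperm_perm_mx mxE (bigD1 (basis_perm (s^-1)%g j)) //= big1 => [|k Hk]; rewrite !mxE.
  by rewrite Hj eqxx mulr1 addr0.
case: eqP => [E|_]; last by rewrite mulr0.
by move: Hk; rewrite -E -permM -basis_permM mulgV basis_perm1 perm1 eqxx.
Qed.

Lemma basis_perm_fix s (k : 'I_10) :
  [/\ (basis_perm s k == 0 :> nat) = (k == 0 :> nat), (basis_perm s k == 1 :> nat) = (k == 1 :> nat)
    & (2 <= basis_perm s k)%N = (2 <= k)%N].
Proof. by rewrite basis_perm_val; case: ifP => //; split; lia. Qed.

Lemma gperm_BK s : gperm s *m BK *m (gperm s)^T = BK.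
Proof.
rewrite gperm_perm_mx tr_perm_mx -row_permE -col_permE.
apply/matrixP => i j; rewrite !mxE (inj_eq perm_inj).
by case: (basis_perm_fix s i) => -> -> _; case: (basis_perm_fix s j) => -> -> _.
Qed.

Lemma bform_gperm s x y : bform BK (x *m gperm s) (y *m gperm s) = bform BK x y.
Proof. by rewrite bform_mulmx gperm_BK. Qed.

Lemma halfv_gperm s : halfv *m gperm s = halfv.
Proof.
apply/matrixP => i j; rewrite (ord1 i) mul_gpermE !natmxE.
by case: (basis_perm_fix (s^-1)%g j) => _ _ ->.
Qed.

Lemma intmx_gperm s : intmx (gperm s).
Proof. by move=> i j; rewrite mxE; exact: is_int_bit. Qed.

Lemma Mlat_gperm s x : Mlat x -> Mlat (x *m gperm s).
Proof.
case/MlatE => z Hz [t ->]; apply/MlatE; exists (z *m gperm s).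
  exact: intmxM (intmx_gperm s).
by exists t; rewrite mulmxDl -scalemxAl halfv_gperm.
Qed.

Lemma dual_gperm s x : dual BK Mlat x -> dual BK Mlat (x *m gperm s).
Proof. by move=> Hx y Hy; rewrite -(gpermVK s y) bform_gperm; apply: Hx; exact: Mlat_gperm. Qed.

Lemma halfvec_gperm s v : size v = 8%N -> halfvec v *m gperm s = halfvec (permw s v).
Proof.
move=> Hv; apply/matrixP => i j; rewrite (ord1 i) mul_gpermE !natmxE.
case: (basis_perm_fix (s^-1)%g j) => _ _ ->; case: ifP => // Hj.
rewrite basis_perm_val ifF; last by lia.
by rewrite addnK nth_permw //; have := ltn_ord j; lia.
Qed.

Lemma disc_isometry_gperm s : disc_isometry BK Mlat (fun x => x *m gperm s).
Proof.
split; first exact: dual_gperm.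
split; first by move=> x y _ _ H; rewrite -mulmxBl; exact: Mlat_gperm.
split; first by move=> x y _ _; rewrite mulmxDl subrr; exact: zspan0.
split; first by move=> x y _ _ /(Mlat_gperm (s^-1)%g); rewrite mulmxBl !gpermKV.
split; last by move=> x _; rewrite bform_gperm; exact: eq_mod2_refl.
move=> y Hy; exists (y *m gperm (s^-1)%g); first exact: dual_gperm.
by rewrite gpermVK subrr; exact: zspan0.
Qed.

Section InducedWordMap.
Variable f : 'rV[rat]_10 -> 'rV[rat]_10.
Hypothesis f_iso : disc_isometry BK Mlat f.

Let f_dual := proj1 f_iso.
Let f_wd := proj1 (proj2 f_iso).
Let f_add := proj1 (proj2 (proj2 f_iso)).
Let f_q := proj2 (proj2 (proj2 (proj2 (proj2 f_iso)))).

Definition word_map v := frac_bits (f (halfvec v)).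

Lemma word_map_even v : even_word v -> even_word (word_map v).
Proof. by move=> Hv; apply: frac_bits_even; apply: f_dual; exact: halfvec_dual. Qed.

Lemma word_mapP v : even_word v -> Mlat (f (halfvec v) - halfvec (word_map v)).
Proof. by move=> Hv; apply: Mlat_int; apply: dual_sub_frac; apply: f_dual; apply: halfvec_dual. Qed.

Lemma word_map_congw v w : even_word v -> even_word w -> congw v w ->
  congw (word_map v) (word_map w).
Proof.
move=> Hv Hw Hs; apply/Mlat_halfvec_subP; rewrite ?size_frac_bits //.
apply: zspan_trans (zspan_sym (word_mapP Hv)) (zspan_trans _ (word_mapP Hw)).
by apply: f_wd; try exact: halfvec_dual; apply/Mlat_halfvec_subP; rewrite ?even_word_size.
Qed.

Lemma word_map_addw v w : even_word v -> even_word w ->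
  congw (word_map (addw v w)) (addw (word_map v) (word_map w)).
Proof.
move=> Hv Hw; have Hvw := addw_even Hv Hw.
have Hs8v := even_word_size Hv; have Hs8w := even_word_size Hw.
have HFv := even_word_size (word_map_even Hv); have HFw := even_word_size (word_map_even Hw).
apply/Mlat_halfvec_subP; rewrite ?size_frac_bits ?size_addw ?HFv ?HFw //.
apply: zspan_trans (zspan_sym (word_mapP Hvw)) _.
apply: (@zspan_trans _ _ _ _ (f (halfvec v + halfvec w))).
  apply: f_wd; [exact: halfvec_dual | exact: dualD (halfvec_dual Hv) (halfvec_dual Hw) |].
  exact: zspan_sym (Mlat_int (intmx_halfvec_addw Hs8v Hs8w)).
apply: (@zspan_trans _ _ _ _ (f (halfvec v) + f (halfvec w))).
  by apply: f_add; exact: halfvec_dual.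
apply: (@zspan_trans _ _ _ _ (halfvec (word_map v) + halfvec (word_map w))).
  by have := zspanD (word_mapP Hv) (word_mapP Hw); rewrite opprD addrACA.
exact: Mlat_int (intmx_halfvec_addw HFv HFw).
Qed.

Lemma word_map_qw v : even_word v -> qw (word_map v) = qw v.
Proof.
move=> Hv; have HFv := word_map_even Hv; apply: qw_eq_mod2 => //.
apply: eq_mod2_trans (f_q (halfvec_dual Hv)).
exact: eq_mod2_sym (q_M_wd (halfvec_dual HFv) (word_mapP Hv)).
Qed.

Lemma word_map_additive : additive_mod_compl word_map.
Proof. by split; [exact: word_map_even | exact: word_map_congw | exact: word_map_addw]. Qed.

(* [bw] is the polarisation of [qw], so it is preserved as well. *)
Lemma word_map_bw v w : even_word v -> even_word w -> bw (word_map v) (word_map w) = bw v w.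
Proof.
move=> Hv Hw; have HFv := word_map_even Hv; have HFw := word_map_even Hw.
have Hvw := addw_even Hv Hw.
have E : qw (addw (word_map v) (word_map w)) = qw (addw v w).
  rewrite -(word_map_qw Hvw); apply: qw_congw; rewrite ?addw_even ?word_map_even //.
  exact: congw_sym (word_map_addw Hv Hw).
move: E; rewrite (qw_addw HFv HFw) (qw_addw Hv Hw) (word_map_qw Hv) (word_map_qw Hw).
by case: (qw v); case: (qw w); case: (bw v w); case: (bw (word_map v) (word_map w)).
Qed.

Definition chain_image i := normw (word_map (chainw i)).

Lemma chain_image_qodd i : (i < 6)%N -> chain_image i \in qodd_reps.
Proof.
move=> Hi; have Hb := even_chainw (ltnW Hi); have [Hn _ Hq H7] := normwP (word_map_even Hb).
by apply: mem_qodd_reps => //; rewrite /chain_image Hq word_map_qw //; exact: qw_chainw.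
Qed.

Lemma chain_image_bw i j : (i < 6)%N -> (j < 6)%N ->
  bw (chain_image i) (chain_image j) = bw (chainw i) (chainw j).
Proof.
move=> Hi Hj; have Hbi := even_chainw (ltnW Hi); have Hbj := even_chainw (ltnW Hj).
by rewrite bw_normw ?word_map_bw ?word_map_even.
Qed.

Lemma chain_image_perm : exists s : 'S_8,
  forall i, (i < 6)%N -> congw (word_map (chainw i)) (permw s (chainw i)).
Proof.
have : is_chain_of_pairs [seq chain_image i | i <- iota 0 6].
  apply: chain_searchE; rewrite ?chain_image_bw //=.
  by rewrite !chain_image_qodd.
case/chain_of_pairs_perm => s Hs; exists s => i Hi.
have [_ Hn _ _] := normwP (word_map_even (even_chainw (ltnW Hi))).
apply: congw_trans (congw_sym Hn) _.
by have := Hs i Hi; rewrite (nth_map 0%N) ?size_iota // nth_iota.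
Qed.

Lemma disc_isometry_gperm_surj : exists s, disc_equiv BK Mlat f (fun x => x *m gperm s).
Proof.
have [s Hs] := chain_image_perm; exists s => x Hx.
have Hv := frac_bits_even Hx; set v := frac_bits x in Hv *.
have Hxv : Mlat (x - halfvec v) := Mlat_int (dual_sub_frac Hx).
apply: (@zspan_trans _ _ _ _ (f (halfvec v))); first by apply: f_wd => //; exact: halfvec_dual.
apply: zspan_trans (word_mapP Hv) _.
apply: (@zspan_trans _ _ _ _ (halfvec (permw s v))).
  apply/Mlat_halfvec_subP; rewrite ?size_frac_bits ?size_permw //.
  exact: congw_of_chain word_map_additive (permw_additive s) Hs v Hv.
rewrite -halfvec_gperm ?(even_word_size Hv) // -mulmxBl; apply: Mlat_gperm.
exact: zspan_sym Hxv.
Qed.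

End InducedWordMap.

Lemma perm_eq_of_pairs n (s t : 'S_n.+3) :
  (forall a b, a != b -> (s a == t a) || (s a == t b)) -> s = t.
Proof.
move=> H; apply/permP => i.
pose j : 'I_n.+3 := inord (if i == 0 :> nat then 1 else 0).
pose k : 'I_n.+3 := inord (if (i <= 1)%N then 2 else 1).
have vj : j = (if i == 0 :> nat then 1 else 0)%N :> nat by rewrite inordK //; case: ifP.
have vk : k = (if (i <= 1)%N then 2 else 1)%N :> nat by rewrite inordK //; case: ifP.
have Hij : i != j by apply/eqP => /(congr1 (@nat_of_ord _)); rewrite vj; case: ifP => /eqP; lia.
have Hik : i != k by apply/eqP => /(congr1 (@nat_of_ord _)); rewrite vk; case: ifP; lia.
have Hjk : j != k.
  by apply/eqP => /(congr1 (@nat_of_ord _)); rewrite vj vk; case: ifP => /eqP; case: ifP; lia.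
move: (H i j Hij) (H i k Hik) => /orP [/eqP // | /eqP Ej] /orP [/eqP // | /eqP Ek].
by move: Hjk; rewrite -(inj_eq (@perm_inj _ t)) -Ej -Ek eqxx.
Qed.

Lemma gperm_equiv_pairs (s t : 'S_8) :
  disc_equiv BK Mlat (fun x => x *m gperm s) (fun x => x *m gperm t) ->
  forall a b, a != b -> (s a == t a) || (s a == t b).
Proof.
move=> H a b Hab.
have [Hev _] := pairwP (ltn_ord a) (ltn_ord b) (ltn_ord a) (ltn_ord b) Hab.
have := H _ (halfvec_dual Hev); rewrite !halfvec_gperm ?(even_word_size Hev) //.
move/Mlat_halfvec_subP => /(_ (size_permw _ _) (size_permw _ _)).
rewrite !permw_pairw ?ltn_ord // !inord_val => Hcong.
have Hsab : (val (s a) != val (s b))%N by rewrite (inj_eq val_inj) (inj_eq perm_inj).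
have [_ ] := pairwP (ltn_ord (s a)) (ltn_ord (s b)) (ltn_ord (t a)) (ltn_ord (t b)) Hsab.
by move/(_ Hcong).
Qed.

Lemma Oq_M_gperm : iso_S8_Oq BK Mlat (fun s x => x *m gperm s).
Proof.
split; first exact: disc_isometry_gperm.
split; first by move=> s t x _ /=; rewrite gpermM mulmxA subrr; exact: zspan0.
split; first by move=> s t /gperm_equiv_pairs; apply: perm_eq_of_pairs.
by move=> f Hf; exact: disc_isometry_gperm_surj.
Qed.

(** * Transfer to N *)

(* Maps [al] and [be] inducing mutually inverse isometries of the discriminant
   forms transport any parametrisation of O(q) by S_8 from one lattice to the other. *)
Section DiscTransfer.
Variables (a b k1 k2 : nat) (B1 : 'M[rat]_a) (G1 : 'M[rat]_(k1, a))
  (B2 : 'M[rat]_b) (G2 : 'M[rat]_(k2, b)) (al : 'M[rat]_(a, b)) (be : 'M[rat]_(b, a)).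
Local Notation L1 := (zspan G1).
Local Notation L2 := (zspan G2).
Local Notation D1 := (dual B1 L1).
Local Notation D2 := (dual B2 L2).

Hypotheses (dual_al : forall x, D1 x -> D2 (x *m al)) (dual_be : forall y, D2 y -> D1 (y *m be)).
Hypotheses (lat_al : forall x, L1 x -> L2 (x *m al)) (lat_be : forall y, L2 y -> L1 (y *m be)).
Hypothesis be_alK : forall y, D2 y -> L2 (y *m be *m al - y).
Hypothesis al_beK : forall x, D1 x -> L1 (x *m al *m be - x).
Hypothesis q_al : forall x, D1 x -> eq_mod2 (bform B2 (x *m al) (x *m al)) (bform B1 x x).
Hypothesis q2_wd : forall y z, D2 y -> L2 (z - y) -> eq_mod2 (bform B2 z z) (bform B2 y y).

Lemma lat_al_sub x y : L1 (x - y) -> L2 (x *m al - y *m al).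
Proof. by move/lat_al; rewrite mulmxBl. Qed.
Lemma lat_be_sub x y : L2 (x - y) -> L1 (x *m be - y *m be).
Proof. by move/lat_be; rewrite mulmxBl. Qed.

Variable Phi : 'S_8 -> 'rV[rat]_b -> 'rV[rat]_b.
Hypothesis Phi_iso : iso_S8_Oq B2 L2 Phi.

Definition transport s (x : 'rV[rat]_a) := Phi s (x *m al) *m be.

Lemma transport_isometry s : disc_isometry B1 L1 (transport s).
Proof.
have [P1 [P2 [P3 [P4 [P5 P6]]]]] := proj1 Phi_iso s.
split; first by move=> x Hx; apply: dual_be; apply: P1; apply: dual_al.
split.
  move=> x y Hx Hy Hxy; apply: lat_be_sub.
  by apply: P2; [exact: dual_al | exact: dual_al | exact: lat_al_sub].
split.
  move=> x y Hx Hy; rewrite /transport -mulmxDl -mulmxBl; apply: lat_be.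
  by rewrite mulmxDl; apply: P3; exact: dual_al.
split.
  move=> x y Hx Hy H; have Hxa := dual_al Hx; have Hya := dual_al Hy.
  have H2 : L2 (Phi s (x *m al) - Phi s (y *m al)).
    apply: zspan_trans (zspan_sym (be_alK (P1 _ Hxa))) _.
    exact: zspan_trans (lat_al_sub H) (be_alK (P1 _ Hya)).
  apply: zspan_trans (zspan_sym (al_beK Hx)) _.
  exact: zspan_trans (lat_be_sub (P4 _ _ Hxa Hya H2)) (al_beK Hy).
split.
  move=> y Hy; have [x2 Hx2 H] := P5 _ (dual_al Hy); exists (x2 *m be); first exact: dual_be.
  have H1 : L2 (Phi s (x2 *m be *m al) - Phi s x2).
    by apply: P2 => //; [exact: dual_al (dual_be Hx2) | exact: be_alK].
  exact: zspan_trans (lat_be_sub (zspan_trans H1 H)) (al_beK Hy).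
move=> x Hx; have Hxa := dual_al Hx; have Hp := P1 _ Hxa.
apply: eq_mod2_trans (eq_mod2_sym (q_al (dual_be Hp))) _.
apply: eq_mod2_trans (q2_wd Hp (be_alK Hp)) _.
exact: eq_mod2_trans (P6 _ Hxa) (q_al Hx).
Qed.

Lemma transport_hom s t : disc_equiv B1 L1 (transport (s * t)%g) (transport t \o transport s).
Proof.
move=> x Hx /=; rewrite /transport; have Hxa := dual_al Hx.
have [Ps1 _] := proj1 Phi_iso s; have [_ [Qt2 _]] := proj1 Phi_iso t.
apply: lat_be_sub; apply: zspan_trans (proj1 (proj2 Phi_iso) s t _ Hxa) _ => /=.
apply: Qt2; [exact: Ps1 | exact: dual_al (dual_be (Ps1 _ Hxa)) |].
exact: zspan_sym (be_alK (Ps1 _ Hxa)).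
Qed.

Lemma transport_inj s t : disc_equiv B1 L1 (transport s) (transport t) -> s = t.
Proof.
move=> H; apply: (proj1 (proj2 (proj2 Phi_iso))) => y Hy.
have Hyb := dual_be Hy; have Hyba := dual_al Hyb.
have [Ps1 [Ps2 _]] := proj1 Phi_iso s; have [Qt1 [Qt2 _]] := proj1 Phi_iso t.
have H2 : L2 (Phi s (y *m be *m al) - Phi t (y *m be *m al)).
  apply: zspan_trans (zspan_sym (be_alK (Ps1 _ Hyba))) _.
  exact: zspan_trans (lat_al_sub (H _ Hyb)) (be_alK (Qt1 _ Hyba)).
have Ha : L2 (Phi s y - Phi s (y *m be *m al)) by apply: Ps2 => //; exact: zspan_sym (be_alK Hy).
have Hb : L2 (Phi t (y *m be *m al) - Phi t y) by apply: Qt2 => //; exact: be_alK Hy.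
exact: zspan_trans Ha (zspan_trans H2 Hb).
Qed.

Lemma pullback_isometry f : disc_isometry B1 L1 f ->
  disc_isometry B2 L2 (fun y => f (y *m be) *m al).
Proof.
case=> P1 [P2 [P3 [P4 [P5 P6]]]].
split; first by move=> y Hy; apply: dual_al; apply: P1; apply: dual_be.
split.
  move=> y y' Hy Hy' H; apply: lat_al_sub.
  by apply: P2; [exact: dual_be | exact: dual_be | exact: lat_be_sub].
split.
  move=> y y' Hy Hy'; rewrite -mulmxDl -mulmxBl; apply: lat_al.
  by rewrite mulmxDl; apply: P3; exact: dual_be.
split.
  move=> y y' Hy Hy' H; have Hfy := P1 _ (dual_be Hy); have Hfy' := P1 _ (dual_be Hy').
  have H2 : L1 (f (y *m be) - f (y' *m be)).
    apply: zspan_trans (zspan_sym (al_beK Hfy)) _.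
    exact: zspan_trans (lat_be_sub H) (al_beK Hfy').
  apply: zspan_trans (zspan_sym (be_alK Hy)) _.
  exact: zspan_trans (lat_al_sub (P4 _ _ (dual_be Hy) (dual_be Hy') H2)) (be_alK Hy').
split.
  move=> y Hy; have [x1 Hx1 H] := P5 _ (dual_be Hy); exists (x1 *m al); first exact: dual_al.
  have H1 : L1 (f (x1 *m al *m be) - f x1).
    by apply: P2 => //; [exact: dual_be (dual_al Hx1) | exact: al_beK].
  exact: zspan_trans (lat_al_sub (zspan_trans H1 H)) (be_alK Hy).
move=> y Hy; have Hyb := dual_be Hy; have Hf := P1 _ Hyb.
apply: eq_mod2_trans (q_al Hf) _; apply: eq_mod2_trans (P6 _ Hyb) _.
exact: eq_mod2_trans (eq_mod2_sym (q_al Hyb)) (q2_wd Hy (be_alK Hy)).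
Qed.

Lemma transport_surj f : disc_isometry B1 L1 f -> exists s, disc_equiv B1 L1 f (transport s).
Proof.
move=> Hf; have [s Hs] := proj2 (proj2 (proj2 Phi_iso)) _ (pullback_isometry Hf).
exists s => x Hx; have Hxa := dual_al Hx; have H := Hs _ Hxa; rewrite /= in H.
case: Hf => P1 [P2 _].
have H1 : L1 (f x - f (x *m al *m be)).
  by apply: P2 => //; [exact: dual_be (dual_al Hx) | exact: zspan_sym (al_beK Hx)].
have H2 : L1 (f (x *m al *m be) - f (x *m al *m be) *m al *m be).
  exact: zspan_sym (al_beK (P1 _ (dual_be Hxa))).
exact: zspan_trans H1 (zspan_trans H2 (lat_be_sub H)).
Qed.

Lemma iso_S8_Oq_transport : iso_S8_Oq B1 L1 transport.
Proof.
split; first exact: transport_isometry.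
split; first exact: transport_hom.
split; first exact: transport_inj.
exact: transport_surj.
Qed.

End DiscTransfer.

(* N = U + U(2) + D4 + D4 and M = U(2) + D4 + D4 (in the basis [Pbasis]): the
   unimodular summand U contributes nothing to the discriminant form. *)
Definition N_to_M : 'M[rat]_(12, 10) :=
  natmx 12 10 (fun i j => if (2 <= i)%N then pbasis (i - 2) j else 0).
Definition M_to_N : 'M[rat]_(10, 12) :=
  natmx 10 12 (fun i j => if (2 <= j)%N then (nth 0 (nth [::] PM_in_Pbasis i) (j - 2))%:~R else 0).

Definition bn (a b : nat) : rat :=
  if (a < 2)%N && (b < 2)%N then (if a == b then 0 else 1)
  else if (2 <= a < 4)%N && (2 <= b < 4)%N then (if a == b then 0 else 2)
  else if (4 <= a < 8)%N && (4 <= b < 8)%N then d4 (a - 4) (b - 4)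
  else if (8 <= a)%N && (8 <= b)%N then d4 (a - 8) (b - 8)
  else 0.
Definition BN_U : 'M[rat]_12 :=
  natmx 12 12 (fun i j => if (i < 2)%N && (j < 2)%N then bn i j else 0).
Definition BN_M : 'M[rat]_12 :=
  natmx 12 12 (fun i j => if (i < 2)%N && (j < 2)%N then 0 else bn i j).
Definition dropU : 'M[rat]_(12, 10) := natmx 12 10 (fun i j => (i == j + 2)%N%:R).
Definition padU : 'M[rat]_(10, 12) := natmx 10 12 (fun i j => (j == i + 2)%N%:R).
Definition swapU : 'M[rat]_12 :=
  natmx 12 12 (fun i j => (((i == 0) && (j == 1)) || ((i == 1) && (j == 0)))%N%:R).
Definition projU : 'M[rat]_12 := natmx 12 12 (fun i j => ((i == j) && (i < 2))%N%:R).

Lemma BN_natmx : BN = natmx 12 12 bn.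
Proof. by apply/matrixP => i j; rewrite !mxE. Qed.
Lemma BN_split : BN = BN_M + BN_U.
Proof. by rewrite BN_natmx; apply/matrixP => i j; rewrite !mxE; case: ifP; rewrite ?add0r ?addr0. Qed.
Lemma tr_BN : BN^T = BN.
Proof. by rewrite BN_natmx tr_natmx; apply: natmx_eq; vm_compute. Qed.

Lemma N_to_M_gram : N_to_M *m BK *m N_to_M^T = BN_M.
Proof. by rewrite BK_natmx /N_to_M tr_natmx !mul_natmx; apply: natmx_eq; vm_compute. Qed.
Lemma M_to_N_to_M : M_to_N *m N_to_M = 1%:M.
Proof. by rewrite natmx1 mul_natmx; apply: natmx_eq; vm_compute. Qed.
Lemma N_to_M_to_N : N_to_M *m M_to_N = 1%:M - projU.
Proof.
have -> : (1%:M - projU : 'M[rat]_12) = natmx 12 12 (fun i j => ((i == j) && (2 <= i))%N%:R).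
  apply/matrixP => i j; rewrite !mxE /=.
  have -> : (i < 2)%N = ~~ (1 < i)%N by rewrite -leqNgt ltnS.
  have -> : (i == j) = (nat_of_ord i == nat_of_ord j) by [].
  by case: (nat_of_ord i == nat_of_ord j); case: (1 < i)%N; rewrite /= ?subr0 ?subrr.
by rewrite mul_natmx; apply: natmx_eq; vm_compute.
Qed.
Lemma M_to_N_BN_U : M_to_N *m BN_U = 0.
Proof. by rewrite natmx0 mul_natmx; apply: natmx_eq; vm_compute. Qed.
Lemma Pbasis_M_to_N : Pbasis *m M_to_N = padU.
Proof. by rewrite mul_natmx; apply: natmx_eq; vm_compute. Qed.
Lemma N_to_M_dropU : N_to_M = dropU *m Pbasis.
Proof. by rewrite mul_natmx; apply: natmx_eq; vm_compute. Qed.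
Lemma BN_swapU : BN *m swapU = projU.
Proof. by rewrite BN_natmx mul_natmx; apply: natmx_eq; vm_compute. Qed.
Lemma BN_U_projU : BN_U = projU *m BN_U *m projU^T.
Proof. by rewrite tr_natmx !mul_natmx; apply: natmx_eq; vm_compute. Qed.

Lemma NlatP x : Nlat x <-> intmx x.
Proof.
split; first by case/zspanP => c Hc ->; rewrite mulmx1.
by move=> H; apply/zspanP; exists x; rewrite ?mulmx1.
Qed.

Lemma dual_intmx n (B : 'M[rat]_n) (L : 'rV[rat]_n -> Prop) x :
  (forall j, L (delta_mx 0 j)) -> dual B L x -> intmx (x *m B).
Proof. by move=> HL Hx i j; rewrite (ord1 i); have := Hx _ (HL j); rewrite /bform trmx_delta -colE mxE. Qed.

Lemma dual_N_intmx x : dual BN Nlat x -> intmx (x *m BN).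
Proof. by apply: dual_intmx => j; apply/NlatP; exact: intmx_delta. Qed.

Lemma Mlat_N_to_M x : Nlat x -> Mlat (x *m N_to_M).
Proof.
move/NlatP => Hx; rewrite N_to_M_dropU mulmxA; apply: Mlat_int_Pbasis.
by apply: intmxM Hx _; apply: intmx_natmx; vm_compute.
Qed.

Lemma Nlat_M_to_N y : Mlat y -> Nlat (y *m M_to_N).
Proof.
move/Mlat_zspan_Pbasis/zspanP => [w Hw ->]; apply/NlatP.
by rewrite -mulmxA Pbasis_M_to_N; apply: intmxM Hw _; apply: intmx_natmx; vm_compute.
Qed.

Lemma bform_M_to_N y z : bform BN (y *m M_to_N) z = bform BK y (z *m N_to_M).
Proof.
have vanish : bform BN_U (y *m M_to_N) z = 0.
  by rewrite /bform -(mulmxA y M_to_N BN_U) M_to_N_BN_U mulmx0 mul0mx mxE.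
rewrite BN_split bform_addmx vanish addr0 -N_to_M_gram -bform_mulmx.
by rewrite -mulmxA M_to_N_to_M mulmx1.
Qed.

Lemma dual_N_to_M x : dual BN Nlat x -> dual BK Mlat (x *m N_to_M).
Proof.
move=> Hx y Hy; rewrite (bformC _ _ tr_BK) -bform_M_to_N bformC ?tr_BN //.
by apply: Hx; exact: Nlat_M_to_N.
Qed.

Lemma dual_M_to_N y : dual BK Mlat y -> dual BN Nlat (y *m M_to_N).
Proof. by move=> Hy z Hz; rewrite bform_M_to_N; apply: Hy; apply: Mlat_N_to_M. Qed.

Lemma M_to_NK y : Mlat (y *m M_to_N *m N_to_M - y).
Proof. by rewrite -mulmxA M_to_N_to_M mulmx1 subrr; exact: zspan0. Qed.

Lemma N_to_MK x : dual BN Nlat x -> Nlat (x *m N_to_M *m M_to_N - x).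
Proof.
move=> Hx; apply/NlatP; rewrite -mulmxA N_to_M_to_N mulmxBr mulmx1 addrC addKr -BN_swapU mulmxA.
by apply: intmxN; apply: intmxM (dual_N_intmx Hx) _; apply: intmx_natmx; vm_compute.
Qed.

Lemma bform_BN_U x y :
  bform BN_U x y = x 0 (inord 0) * y 0 (inord 1) + x 0 (inord 1) * y 0 (inord 0).
Proof.
rewrite /bform /BN_U {1}(natmx_of x) {1}(natmx_of y) tr_natmx !mul_natmx natmxE /=.
rewrite /natsum; cbn [iota foldr].
have -> : (inord 0 : 'I_1) = 0 by apply: ord_inj; rewrite /= inordK.
by rewrite /bn /=; set X := x 0; set Y := y 0; ring.
Qed.

Lemma q_N_to_M x : dual BN Nlat x ->
  eq_mod2 (bform BK (x *m N_to_M) (x *m N_to_M)) (bform BN x x).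
Proof.
move=> Hx; rewrite bform_mulmx N_to_M_gram BN_split bform_addmx BN_U_projU -bform_mulmx.
have -> : bform BN_U (x *m projU) (x *m projU) = 2 * ((x *m projU) 0 (inord 0) * (x *m projU) 0 (inord 1)).
  by rewrite bform_BN_U; ring.
apply: eq_mod2_sym; apply: eq_mod2_addr.
have Hz : intmx (x *m projU) by rewrite -BN_swapU mulmxA; apply: intmxM (dual_N_intmx Hx) _;
  apply: intmx_natmx; vm_compute.
by apply: is_intM; apply: Hz.
Qed.

Lemma Oq_N_transport : iso_S8_Oq BN Nlat (transport N_to_M M_to_N (fun s x => x *m gperm s)).
Proof.
apply: iso_S8_Oq_transport.
- exact: dual_N_to_M.
- exact: dual_M_to_N.
- exact: Mlat_N_to_M.
- exact: Nlat_M_to_N.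
- by move=> y _; exact: M_to_NK.
- exact: N_to_MK.
- exact: q_N_to_M.
- by move=> y z Hy Hz; exact: q_M_wd.
- exact: Oq_M_gperm.
Qed.

Theorem lemma2p4 :
  (exists P : 'M[rat]_10,
      (forall i, Mlat (row i P)) /\ (forall x, Mlat x -> zspan P x) /\
      P *m BK *m P^T = BM0) /\
  Oq_isom_S8 BK Mlat /\ Oq_isom_S8 BN Nlat /\
  (forall s : 'S_8,
      (forall x y, bform BK (x *m gperm s) (y *m gperm s) = bform BK x y) /\
      (forall x, Mlat x -> Mlat (x *m gperm s)) /\
      (forall y, Mlat y -> exists2 x, Mlat x & x *m gperm s = y)) /\
  iso_S8_Oq BK Mlat (fun s x => x *m gperm s).
Proof.
split.
  exists Pbasis; split; first exact: Mlat_row_Pbasis.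
  by split; [exact: Mlat_zspan_Pbasis | exact: Pbasis_gram].
split; first by exists (fun s x => x *m gperm s); exact: Oq_M_gperm.
split; first by eexists; exact: Oq_N_transport.
split; last exact: Oq_M_gperm.
move=> s; split; first exact: bform_gperm.
split; first exact: Mlat_gperm.
by move=> y Hy; exists (y *m gperm (s^-1)%g); [exact: Mlat_gperm | exact: gpermVK].
Qed.
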